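(* Let $n,m$ be positive integers, $\mu_1=\min(n,m)$, $\mu_2=\max(n,m)$. Then \[ P_n^m(g)=W_{\mu_1}(g)\quad\text{for } 0\le g\le \mu_2, \] and \[ P_n^m(g)=W_n(g)+W_m(g)-W_{n+m}(g)\quad\text{for } \mu_2\le g\le n+m . \]
   Context: For positive integers $n,m$ and an integer $s\ge 0$, $P_n^m(s)$ denotes the number of tuples $(x_1,\dots,x_m)$ of non-negative integers satisfying $\sum_{r=1}^m r\,x_r=s$ and $\sum_{r=1}^m x_r\le n$. Equivalently, $P_n^m(s)$ is the coefficient of $t^s$ in the Gaussian polynomial $G(n,m;t)=\frac{\prod_{i=1}^{n+m}(1-t^i)}{\prod_{u=1}^{n}(1-t^u)\prod_{v=1}^{m}(1-t^v)}=\sum_{s=0}^{nm}P_n^m(s)t^s$. For a positive integer $k$ and integer $s\ge0$, $W_k(s)$ denotes the number of partitions of $s$ into parts from $\{1,\dots,k\}$, i.e. the coefficient of $t^s$ in $\prod_{i=1}^k\frac{1}{1-t^i}=\sum_{s\ge0}W_k(s)t^s$; in particular $W_k(0)=1$. *)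

From mathcomp Require Import all_boot all_order all_algebra.
Set Implicit Arguments. Unset Strict Implicit. Unset Printing Implicit Defensive.

(* A tuple (x_1,...,x_m) of non-negative integers is encoded as
   x : {ffun 'I_m -> 'I_s.+1}, with x_r = x (r-1).  The bound x_r <= s is
   automatic whenever sum_r r*x_r = s (since r >= 1), so no tuple is lost. *)

Definition P (n m s : nat) : nat :=
  #|[set x : {ffun 'I_m -> 'I_s.+1} |
      (\sum_(i < m) i.+1 * x i == s) && (\sum_(i < m) (x i : nat) <= n)]|.

(* W_k(s) = number of partitions of s into parts from {1..k}, i.e.
   #{ (y_1..y_k) >= 0 : sum_r r y_r = s } (y_r = multiplicity of part r). *)
Definition W (k s : nat) : nat :=
  #|[set y : {ffun 'I_k -> 'I_s.+1} | \sum_(i < k) i.+1 * y i == s]|.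

From mathcomp Require Import all_boot all_order all_algebra.
From mathcomp Require Import zify.
Import GRing.Theory.
Set Implicit Arguments. Unset Strict Implicit. Unset Printing Implicit Defensive.

(* The count condition sum_r x_r <= n is implied by sum_r r x_r = g as soon
   as g <= n, which gives P n m g = W m g for g <= n.  Conjugating Ferrers
   diagrams (the tuple x is read as the diagram whose j-th column has length
   x_j + ... + x_m) shows P n m = P m n, whence the first range.  For
   max(n,m) <= g <= n+m, view all tuples inside the partitions of g into
   parts <= n+m: those with parts <= m and those with at most n parts cover
   everything (a partition with more than n parts has largest part
   <= g - n <= m), and they meet in the tuples counted by P n m g, so
   inclusion-exclusion gives P n m g = W m g + W n g - W (n+m) g. *)

Lemma card_in_bij (T U : finType) (A : {set T}) (B : {set U})
    (f : T -> U) (g : U -> T) :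
  {in A, forall a, f a \in B} -> {in B, forall b, g b \in A} ->
  {in A, cancel f g} -> {in B, cancel g f} -> #|A| = #|B|.
Proof.
move=> fA gB fK gK; apply/eqP; rewrite eqn_leq; apply/andP; split.
  rewrite -(card_in_imset (can_in_inj fK)); apply: subset_leq_card.
  by apply/subsetP => _ /imsetP [a Ha ->]; exact: fA.
rewrite -(card_in_imset (can_in_inj gK)); apply: subset_leq_card.
by apply/subsetP => _ /imsetP [a Ha ->]; exact: gB.
Qed.

Lemma card_ord_lt n c : c <= n -> #|[set k : 'I_n | k < c]| = c.
Proof.
move=> hc; rewrite -sum1_card.
rewrite (eq_bigl (fun k : 'I_n => k < c)); last by move=> k; rewrite inE.
by rewrite -(big_ord_widen n (fun _ => 1)) // sum1_card card_ord.
Qed.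

Lemma card_by_column n m (A : {set 'I_n * 'I_m}) :
  #|A| = \sum_(j < m) #|[set i : 'I_n | (i, j) \in A]|.
Proof.
rewrite -sum1_card.
rewrite (eq_bigr (fun j => \sum_(i : 'I_n) if (i, j) \in A then 1 else 0));
  last by move=> j _; rewrite -sum1_card big_mkcond; apply: eq_bigr => i _; rewrite inE.
by rewrite big_mkcond /= exchange_big pair_big; apply: eq_bigr => -[i j].
Qed.

Definition Pset n m s := [set x : {ffun 'I_m -> 'I_s.+1} |
  (\sum_(i < m) i.+1 * x i == s) && (\sum_(i < m) (x i : nat) <= n)].

Lemma card_Pset n m s : #|Pset n m s| = P n m s. Proof. by []. Qed.

Lemma P_eq_W n k g : g <= n -> P n k g = W k g.
Proof.
move=> le_gn; apply: eq_card => x; rewrite !inE.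
case: eqP => //= wsum_x; apply: leq_trans le_gn; rewrite -[X in _ <= X]wsum_x.
by apply: leq_sum => i _; rewrite leq_pmull.
Qed.

Section FerrersDiagrams.

Variables n m : nat.

Definition ferrers (A : {set 'I_n * 'I_m}) :=
  [forall p : 'I_n * 'I_m, forall q : 'I_n * 'I_m,
     (p \in A) ==> (q.1 <= p.1) ==> (q.2 <= p.2) ==> (q \in A)].

Lemma ferrersP (A : {set 'I_n * 'I_m}) :
  reflect (forall p q : 'I_n * 'I_m, p \in A -> q.1 <= p.1 -> q.2 <= p.2 -> q \in A)
          (ferrers A).
Proof.
apply: (iffP forallP) => [h p q pA h1 h2|h p].
  by move: (h p) => /forallP /(_ q); rewrite pA h1 h2.
by apply/forallP => q; apply/implyP => pA; apply/implyP => h1; apply/implyP; exact: h.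
Qed.

Definition ferrers_of_card s :=
  [set A : {set 'I_n * 'I_m} | ferrers A && (#|A| == s)].

(* Column lengths are indexed by all of [nat], vanishing past the last column,
   so that [col_len A j - col_len A j.+1] makes sense for [j = m - 1]. *)
Definition col_len (A : {set 'I_n * 'I_m}) (j : nat) :=
  \sum_(j' < m | j' == j :> nat) #|[set i : 'I_n | (i, j') \in A]|.

Variable A : {set 'I_n * 'I_m}.

Lemma col_lenE (j : 'I_m) : col_len A j = #|[set i : 'I_n | (i, j) \in A]|.
Proof. by rewrite /col_len (big_pred1 j). Qed.

Lemma col_len_out j : m <= j -> col_len A j = 0.
Proof.
move=> le_mj; rewrite /col_len big_pred0 // => i; apply/negbTE.
by rewrite neq_ltn (leq_trans (ltn_ord i) le_mj).
Qed.

Lemma col_len_le j : col_len A j <= n.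
Proof.
case: (ltnP j m) => h; last by rewrite col_len_out.
by rewrite (col_lenE (Ordinal h)); apply: leq_trans (max_card _) _; rewrite card_ord.
Qed.

Lemma sum_col_len : \sum_(j < m) col_len A j = #|A|.
Proof. by rewrite card_by_column; apply: eq_bigr => j _; rewrite col_lenE. Qed.

Lemma col_len_le_card j : col_len A j <= #|A|.
Proof.
case: (ltnP j m) => h; last by rewrite col_len_out.
by rewrite -sum_col_len (bigD1 (Ordinal h)) //= leq_addr.
Qed.

Hypothesis fA : ferrers A.

Lemma col_len_nonincr j : col_len A j.+1 <= col_len A j.
Proof.
case: (ltnP j.+1 m) => h; last by rewrite (col_len_out h).
rewrite (col_lenE (Ordinal h)) (col_lenE (Ordinal (ltnW h))).
apply: subset_leq_card; apply/subsetP => i; rewrite !inE => hA.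
by apply: (ferrersP _ fA _ _ hA) => //=; apply: leqnSn.
Qed.

Lemma mem_ferrers (i : 'I_n) (j : 'I_m) : ((i, j) \in A) = (i < col_len A j).
Proof.
have down (a b : 'I_n) : b <= a -> (a, j) \in A -> (b, j) \in A.
  by move=> le_ba aA; exact: (ferrersP _ fA _ _ aA).
rewrite col_lenE; case: (boolP ((i, j) \in A)) => iA; apply/esym.
  rewrite -(card_ord_lt (ltn_ord i)); apply: subset_leq_card.
  by apply/subsetP => k; rewrite !inE ltnS => /down; apply.
apply/negbTE; rewrite -leqNgt -[X in _ <= X](card_ord_lt (ltnW (ltn_ord i))).
apply: subset_leq_card; apply/subsetP => k; rewrite !inE ltnNge => kA.
by apply: contra iA => /down; apply.
Qed.

End FerrersDiagrams.

Definition transpose_cells n m (A : {set 'I_n * 'I_m}) : {set 'I_m * 'I_n} :=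
  [set p | (p.2, p.1) \in A].

Lemma card_transpose_cells n m (A : {set 'I_n * 'I_m}) : #|transpose_cells A| = #|A|.
Proof.
by apply: (card_in_bij (f := fun p => (p.2, p.1)) (g := fun p => (p.2, p.1)))
  => -[i j]; rewrite ?inE.
Qed.

Lemma ferrers_transpose n m (A : {set 'I_n * 'I_m}) :
  ferrers A -> ferrers (transpose_cells A).
Proof.
move=> /ferrersP fA; apply/ferrersP => p q; rewrite !inE => pA h1 h2.
exact: (fA _ _ pA).
Qed.

Lemma transpose_cellsK n m :
  cancel (@transpose_cells n m) (@transpose_cells m n).
Proof. by move=> A; apply/setP => -[i j]; rewrite !inE. Qed.

Lemma card_ferrers_of_card_sym n m s :
  #|ferrers_of_card n m s| = #|ferrers_of_card m n s|.
Proof.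
apply: (card_in_bij (f := @transpose_cells n m) (g := @transpose_cells m n));
  move=> A; rewrite ?transpose_cellsK // !inE => /andP [fA cA].
  by rewrite ferrers_transpose // card_transpose_cells.
by rewrite ferrers_transpose // card_transpose_cells.
Qed.

Definition tail_sum m (z : 'I_m -> nat) (j : nat) := \sum_(i < m | j <= i) z i.

Section TailSums.

Variables (m : nat) (z : 'I_m -> nat).

Lemma tail_sum_out j : m <= j -> tail_sum z j = 0.
Proof.
move=> le_mj; rewrite /tail_sum big_pred0 // => i; apply/negbTE.
by rewrite -ltnNge (leq_trans (ltn_ord i) le_mj).
Qed.

Lemma tail_sumS (j : 'I_m) : tail_sum z j = z j + tail_sum z j.+1.
Proof.
rewrite /tail_sum (bigD1 j) //=; congr (_ + _); apply: eq_bigl => i.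
by rewrite ltn_neqAle andbC eq_sym.
Qed.

Lemma leq_tail_sum j j' : j <= j' -> tail_sum z j' <= tail_sum z j.
Proof.
move=> le_jj'; rewrite /tail_sum [X in _ <= X]big_mkcond [X in X <= _]big_mkcond.
by apply: leq_sum => i _; case: ifP => // h; rewrite (leq_trans le_jj' h).
Qed.

Lemma sum_tail_sum : \sum_(j < m) tail_sum z j = \sum_(i < m) i.+1 * z i.
Proof.
rewrite (eq_bigr (fun j : 'I_m => \sum_(i < m) if j <= i then z i else 0));
  last by move=> j _; rewrite /tail_sum big_mkcond.
rewrite exchange_big; apply: eq_bigr => i _.
rewrite -big_mkcond sum_nat_const; congr (_ * _).
rewrite -[RHS](card_ord_lt (ltn_ord i)); apply: eq_card => j.
by rewrite !inE ltnS.
Qed.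

End TailSums.

Section Telescopes.

Variable c : nat -> nat.
Hypothesis c_nonincr : forall j, c j.+1 <= c j.

Lemma telescope_diff k : \sum_(j < k) (c j - c j.+1) + c k = c 0.
Proof.
elim: k => [|k IH]; first by rewrite big_ord0.
by rewrite big_ord_recr -addnA subnK.
Qed.

Lemma telescope_weighted_diff k :
  \sum_(j < k) j.+1 * (c j - c j.+1) + k * c k = \sum_(j < k) c j.
Proof.
elim: k => [|k IH]; first by rewrite !big_ord0.
rewrite !big_ord_recr -IH /=; have := c_nonincr k; nia.
Qed.

Lemma tail_sum_diff m : (forall j, m <= j -> c j = 0) ->
  forall j, tail_sum (fun i : 'I_m => c i - c i.+1) j = c j.
Proof.
move=> c_out j; have [d] := ubnPeq (m - j); elim: d j => [|d IH] j e.
  by rewrite tail_sum_out ?c_out //; lia.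
have lt_jm : j < m by lia.
by rewrite (tail_sumS _ (Ordinal lt_jm)) /= IH ?subnK //; lia.
Qed.

End Telescopes.

Section TuplesAsDiagrams.

Variables n m s : nat.

Definition cells_of (x : {ffun 'I_m -> 'I_s.+1}) : {set 'I_n * 'I_m} :=
  [set p : 'I_n * 'I_m | p.1 < tail_sum (fun i => (x i : nat)) p.2].

(* The truncation of [inord] never fires on a diagram with [s] cells. *)
Definition tuple_of_cells (A : {set 'I_n * 'I_m}) : {ffun 'I_m -> 'I_s.+1} :=
  [ffun j : 'I_m => inord (col_len A j - col_len A j.+1)].

Lemma col_len_cells_of x : x \in Pset n m s ->
  forall j, col_len (cells_of x) j = tail_sum (fun i => (x i : nat)) j.
Proof.
rewrite inE => /andP [_ sum_x] j.
case: (ltnP j m) => h; last by rewrite col_len_out // tail_sum_out.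
have le_n : tail_sum (fun i => (x i : nat)) j <= n.
  by apply: leq_trans (leq_tail_sum _ (leq0n j)) _.
rewrite (col_lenE _ (Ordinal h)) -[RHS](card_ord_lt le_n).
by apply: eq_card => i; rewrite !inE.
Qed.

Lemma cells_of_ferrers x : x \in Pset n m s -> cells_of x \in ferrers_of_card n m s.
Proof.
move=> xP; have:= xP; rewrite !inE => /andP [/eqP wsum_x _]; apply/andP; split.
  apply/ferrersP => p q; rewrite !inE => hp h1 h2.
  exact: leq_trans (leq_ltn_trans h1 hp) (leq_tail_sum _ h2).
rewrite -sum_col_len -[X in _ == X]wsum_x -sum_tail_sum.
by apply/eqP/eq_bigr => j _; rewrite col_len_cells_of.
Qed.

Section OfDiagram.

Variable A : {set 'I_n * 'I_m}.
Hypothesis AF : A \in ferrers_of_card n m s.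

Let fA : ferrers A. Proof. by move: AF; rewrite inE => /andP []. Qed.
Let cardA : #|A| = s. Proof. by move: AF; rewrite inE => /andP [_ /eqP]. Qed.

Lemma tuple_of_cellsE j : (tuple_of_cells A j : nat) = col_len A j - col_len A j.+1.
Proof.
rewrite ffunE inordK // ltnS -cardA.
exact: leq_trans (leq_subr _ _) (col_len_le_card _ _).
Qed.

Lemma tuple_of_cells_Pset : tuple_of_cells A \in Pset n m s.
Proof.
have c_out := col_len_out A; have c_nonincr := col_len_nonincr fA.
rewrite inE (eq_bigr _ (fun j _ => congr1 _ (tuple_of_cellsE j))).
rewrite (eq_bigr _ (fun j _ => tuple_of_cellsE j)).
have := telescope_weighted_diff c_nonincr m; rewrite c_out // muln0 addn0 => ->.
have := telescope_diff c_nonincr m; rewrite c_out // addn0 => ->.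
by rewrite sum_col_len cardA eqxx col_len_le.
Qed.

Lemma tuple_of_cellsK : cells_of (tuple_of_cells A) = A.
Proof.
apply/setP => -[i j]; rewrite inE /= mem_ferrers //.
rewrite -(tail_sum_diff (col_len_nonincr fA) (col_len_out A)).
by congr (_ < _); apply: eq_bigr => k _; rewrite tuple_of_cellsE.
Qed.

End OfDiagram.

Lemma cells_ofK x : x \in Pset n m s -> tuple_of_cells (cells_of x) = x.
Proof.
move=> xP; apply/ffunP => j.
by rewrite ffunE !col_len_cells_of // tail_sumS addnK inord_val.
Qed.

Lemma P_ferrers : P n m s = #|ferrers_of_card n m s|.
Proof.
apply: (card_in_bij (f := cells_of) (g := tuple_of_cells)).
- exact: cells_of_ferrers.
- exact: tuple_of_cells_Pset.
- exact: cells_ofK.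
- exact: tuple_of_cellsK.
Qed.

End TuplesAsDiagrams.

Lemma P_sym n m s : P n m s = P m n s.
Proof. by rewrite !P_ferrers card_ferrers_of_card_sym. Qed.

Lemma sum_widen_support K k (le_kK : k <= K) (F : 'I_K -> nat) :
  (forall j : 'I_K, k <= j -> F j = 0) ->
  \sum_(j < K) F j = \sum_(i < k) F (widen_ord le_kK i).
Proof.
move=> F_out; rewrite (bigID (fun j : 'I_K => j < k)) /= [X in _ + X]big1 ?addn0.
  exact: big_ord_narrow.
by move=> j; rewrite -leqNgt; exact: F_out.
Qed.

Definition supported_Pset n K k s :=
  [set x in Pset n K s | [forall i : 'I_K, (k <= i) ==> (x i == ord0)]].

Lemma supported_PsetP n K k s (y : {ffun 'I_K -> 'I_s.+1}) :
  reflect (y \in Pset n K s /\ forall j : 'I_K, k <= j -> y j = ord0)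
          (y \in supported_Pset n K k s).
Proof.
apply: (iffP setIdP) => -[yP y_out]; split=> //.
  by move=> j le_kj; apply/eqP; move/forallP/(_ j): y_out; rewrite le_kj.
by apply/forallP => j; apply/implyP => /y_out ->.
Qed.

Section ExtendByZero.

Variables (K k s : nat) (le_kK : k <= K).

Definition extend (x : {ffun 'I_k -> 'I_s.+1}) : {ffun 'I_K -> 'I_s.+1} :=
  [ffun j : 'I_K => odflt ord0 (omap x (insub (val j) : option 'I_k))].

Definition restrict (y : {ffun 'I_K -> 'I_s.+1}) : {ffun 'I_k -> 'I_s.+1} :=
  [ffun i => y (widen_ord le_kK i)].

Lemma extend_widen x i : extend x (widen_ord le_kK i) = x i.
Proof.
rewrite ffunE /=; case: insubP => [u _ e|]; last by rewrite ltn_ord.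
by congr (x _); apply: val_inj.
Qed.

Lemma extend_out x (j : 'I_K) : k <= j -> extend x j = ord0.
Proof. by move=> le_kj; rewrite ffunE insubF // ltnNge le_kj. Qed.

Lemma extendK : cancel extend restrict.
Proof. by move=> x; apply/ffunP => i; rewrite ffunE extend_widen. Qed.

Variable y : {ffun 'I_K -> 'I_s.+1}.
Hypothesis y_out : forall j : 'I_K, k <= j -> y j = ord0.

Lemma restrictK : extend (restrict y) = y.
Proof.
apply/ffunP => j; case: (ltnP j k) => [lt_jk | /[dup] le_kj /y_out ->].
  have -> : j = widen_ord le_kK (Ordinal lt_jk) by apply: val_inj.
  by rewrite extend_widen ffunE.
by rewrite extend_out.
Qed.

Lemma Pset_restrict n : (y \in Pset n K s) = (restrict y \in Pset n k s).
Proof.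
rewrite !inE !(sum_widen_support le_kK) => [|j /y_out -> //|j /y_out ->];
  last by rewrite muln0.
by congr ((_ == _) && (_ <= _)); apply: eq_bigr => i _; rewrite ffunE.
Qed.

End ExtendByZero.

Lemma card_supported_Pset n K k s :
  k <= K -> #|supported_Pset n K k s| = P n k s.
Proof.
move=> le_kK; rewrite -card_Pset; symmetry.
apply: (card_in_bij (f := @extend K k s) (g := restrict le_kK)).
- move=> x xP; have x_out := @extend_out K k s x.
  by apply/supported_PsetP; rewrite (Pset_restrict le_kK x_out) extendK.
- by move=> y /supported_PsetP [yP /(Pset_restrict le_kK) <-].
- by move=> x _; rewrite extendK.
- by move=> y /supported_PsetP [_ /restrictK].
Qed.

Lemma parts_small_of_many_parts K n m (x : 'I_K -> nat) (j : 'I_K) :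
  \sum_(i < K) i.+1 * x i <= n + m -> n < \sum_(i < K) x i -> m <= j -> x j = 0.
Proof.
move=> wsum_le many le_mj; apply/eqP; apply: contraTT wsum_le.
rewrite -lt0n -ltnNge => xj_gt0.
have -> : \sum_(i < K) i.+1 * x i = \sum_(i < K) x i + \sum_(i < K) i * x i.
  by rewrite -big_split; apply: eq_bigr => i _; rewrite mulSn.
have le_jx : j * x j <= \sum_(i < K) i * x i by rewrite (bigD1 j) //= leq_addr.
have : m <= j * x j by apply: leq_trans le_mj (leq_pmulr _ xj_gt0).
lia.
Qed.

Section InclusionExclusion.

Variables n m g : nat.
Hypotheses (le_ng : n <= g) (le_g_nm : g <= n + m).

Lemma supported_Pset_cover :
  supported_Pset g (n + m) m g :|: Pset n (n + m) g = Pset g (n + m) g.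
Proof.
apply/setP => x; rewrite in_setU; apply/orP/idP => [[/supported_PsetP [] //|]|xP].
  by rewrite !inE => /andP [-> /leq_trans ->].
case: (boolP (x \in Pset n (n + m) g)) => [|xPn]; [by right | left].
apply/supported_PsetP; split=> // j le_mj; apply: val_inj => /=.
move: xP xPn; rewrite !inE => /andP [/eqP wsum_x _]; rewrite wsum_x eqxx -ltnNge.
by move=> many; apply: (parts_small_of_many_parts _ many le_mj); rewrite wsum_x.
Qed.

Lemma supported_Pset_meet :
  supported_Pset g (n + m) m g :&: Pset n (n + m) g = supported_Pset n (n + m) m g.
Proof.
apply/setP => x; apply/setIP/supported_PsetP => [[/supported_PsetP [_ x_out] xP] //|].
move=> [xP x_out]; split=> //; apply/supported_PsetP; split=> //.
by move: xP; rewrite !inE => /andP [-> /leq_trans ->].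
Qed.

End InclusionExclusion.

Theorem theorem2 (n m : nat) (hn : 0 < n) (hm : 0 < m) :
  (forall g : nat, g <= maxn n m -> P n m g = W (minn n m) g) /\
  (forall g : nat, maxn n m <= g <= n + m ->
     ((P n m g)%:Z = (W n g)%:Z + (W m g)%:Z - (W (n + m) g)%:Z)%R).
Proof.
split=> [g le_g_max | g /andP [le_max_g le_g_nm]].
  case: (leqP m n) => [le_mn | /ltnW le_nm].
    by rewrite P_eq_W // -(maxn_idPl le_mn).
  by rewrite P_sym P_eq_W // -(maxn_idPr le_nm).
have le_ng : n <= g by apply: leq_trans (leq_maxl n m) le_max_g.
have := cardsUI (supported_Pset g (n + m) m g) (Pset n (n + m) g).
rewrite supported_Pset_cover // supported_Pset_meet // !card_supported_Pset ?leq_addl //.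
rewrite !card_Pset [P n (n + m) g]P_sym.
rewrite [P g _ g]P_eq_W // [P g _ g]P_eq_W // [P (n + m) n g]P_eq_W // => card_eq.
by apply/eqP; rewrite eq_sym subr_eq -!PoszD; apply/eqP; congr Posz; lia.
Qed.
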